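(* For the Chern connection $\nabla_E$ of a finitely generated projective holomorphic left module $E$ with non-degenerate hermitian metric (as in the context), the components of its curvature $R_E=({\rm d}\otimes\mathrm{id}-\mathrm{id}\wedge\nabla_E)\nabla_E:E\to\Omega^2\otimes_AE$ in $\Omega^{0,2}\otimes_AE$ and in $\Omega^{2,0}\otimes_AE$ vanish.
   Context: $A$ is a $*$-algebra with $*$-calculus and integrable almost complex structure ($\Omega^n=\oplus_{p+q=n}\Omega^{p,q}$, ${\rm d}=\partial+\overline\partial$, $\partial^2=\overline\partial^2=0$, $\wedge$ respecting bidegree, $*$ exchanging $\Omega^{1,0},\Omega^{0,1}$). $E$ is a left $A$-module, finitely generated projective, with holomorphic structure $\overline\partial_E:E\to\Omega^{0,1}\otimes_AE$ ($\overline\partial_E(a.e)=\overline\partial a\otimes e+a.\overline\partial_Ee$, and $(\overline\partial\otimes\mathrm{id}-\mathrm{id}\wedge\overline\partial_E)\overline\partial_E=0$), and $\langle,\rangle:E\otimes_A\overline E\to A$ is a non-degenerate hermitian inner product (bimodule map with $\langle e,\overline f\rangle^*=\langle f,\overline e\rangle$, induced by a bimodule isomorphism $\overline E\to{}_A{\rm Hom}(E,A)$). The Chern connection is the unique left connection $\nabla_E:E\to\Omega^1\otimes_AE$ that preserves the metric (${\rm d}\langle e,\overline f\rangle=(\mathrm{id}\otimes\langle,\rangle)(\nabla_Ee\otimes\overline f)+(\langle,\rangle\otimes\mathrm{id})(e\otimes\tilde\nabla\overline f)$, $\tilde\nabla(\overline f)=\overline g\otimes\kappa^*$ when $\nabla_Ef=\kappa\otimes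 g$) and satisfies $(\pi^{0,1}\otimes\mathrm{id})\nabla_E=\overline\partial_E$. *)

From HB Require Import structures.
From mathcomp Require Import all_boot all_order all_algebra.
Set Implicit Arguments. Unset Strict Implicit. Unset Printing Implicit Defensive.
Import Order.TTheory GRing.Theory Num.Theory.
Local Open Scope ring_scope.

Definition is_add (U V : zmodType) (f : U -> V) : Prop :=
  forall x y, f (x + y) = f x + f y.

Definition llinear (A : pzRingType) (U V : lmodType A) (f : U -> V) : Prop :=
  is_add f /\ forall a x, f (a *: x) = a *: f x.

Definition is_bimod (A : pzRingType) (M : lmodType A) (ra : M -> A -> M) : Prop :=
  [/\ forall x y a, ra (x + y) a = ra x a + ra y a,
      forall x a b, ra x (a + b) = ra x a + ra x b,
      forall x a b, ra x (a * b) = ra (ra x a) b,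
      forall x, ra x 1 = x
    & forall a x b, ra (a *: x) b = a *: ra x b].

Definition bimod_map (A : pzRingType) (M : lmodType A) (ra : M -> A -> M)
  (p : M -> M) : Prop :=
  [/\ is_add p, forall a x, p (a *: x) = a *: p x & forall x a, p (ra x a) = ra (p x) a].

(* [T] together with [t : M -> N -> T] is the tensor product M (x)_A N
   (M a right A-module via [ra], N a left A-module), given by its universal
   property: [t] is biadditive and A-balanced, and every biadditive balanced
   map into a Z-module factors uniquely through an additive map on [T]. *)
Definition biadd_bal (A : pzRingType) (M : lmodType A) (ra : M -> A -> M)
  (N : lmodType A) (Z : zmodType) (f : M -> N -> Z) : Prop :=
  [/\ forall m m' n, f (m + m') n = f m n + f m' n,
      forall m n n', f m (n + n') = f m n + f m n'
    & forall m a n, f (ra m a) n = f m (a *: n)].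

Definition is_tensor (A : pzRingType) (M : lmodType A) (ra : M -> A -> M)
  (N : lmodType A) (T : zmodType) (t : M -> N -> T) : Prop :=
  biadd_bal ra t /\
  forall (Z : zmodType) (f : M -> N -> Z), biadd_bal ra f ->
    exists g : T -> Z,
      [/\ is_add g, (forall m n, g (t m n) = f m n)
        & forall g' : T -> Z, is_add g' -> (forall m n, g' (t m n) = f m n) ->
            forall x, g' x = g x].

(* finitely generated projective left module: a direct summand (retract)
   of a finite free module A^n *)
Definition fg_projective (A : pzRingType) (E : lmodType A) : Prop :=
  exists n (s : E -> 'rV[A]_n) (p : 'rV[A]_n -> E),
    [/\ llinear s, llinear p & forall e, p (s e) = e].

(* Data of a *-algebra with a differential *-calculus, truncated in degree 2
   (Omega^0 = A, Omega^1, Omega^2), with bidegree projections. *)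
Record calc (C : numClosedFieldType) (A : algType C) := Calc {
  star : A -> A;
  Om1 : lmodType A;  ra1 : Om1 -> A -> Om1;
  Om2 : lmodType A;  ra2 : Om2 -> A -> Om2;
  d0 : A -> Om1;  d1 : Om1 -> Om2;
  wedge : Om1 -> Om1 -> Om2;
  star1 : Om1 -> Om1;  star2 : Om2 -> Om2;
  p10 : Om1 -> Om1;  p01 : Om1 -> Om1;
  p20 : Om2 -> Om2;  p11 : Om2 -> Om2;  p02 : Om2 -> Om2 }.

Arguments star {C A} c _.
Arguments Om1 {C A} c.  Arguments Om2 {C A} c.
Arguments ra1 {C A} c _ _.  Arguments ra2 {C A} c _ _.
Arguments d0 {C A} c _.  Arguments d1 {C A} c _.
Arguments wedge {C A} c _ _.
Arguments star1 {C A} c _.  Arguments star2 {C A} c _.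
Arguments p10 {C A} c _.  Arguments p01 {C A} c _.
Arguments p20 {C A} c _.  Arguments p11 {C A} c _.  Arguments p02 {C A} c _.

(* dbar on A and on Omega^1 (dbar = pi^{p,q+1} o d on Omega^{p,q}) *)
Definition dbar0 (C : numClosedFieldType) (A : algType C) (O : calc A) (a : A) : Om1 O := p01 O (d0 O a).
Definition dbar1 (C : numClosedFieldType) (A : algType C) (O : calc A) (x : Om1 O) : Om2 O :=
  p11 O (d1 O (p10 O x)) + p02 O (d1 O (p01 O x)).

Arguments dbar1 {C A} O x.

Definition int_star_calc (C : numClosedFieldType) (A : algType C) (O : calc A) : Prop :=
  let st := star O in
  let ra1 := ra1 O in let ra2 := ra2 O in
  let d0 := d0 O in let d1 := d1 O in let w := wedge O in
  let s1 := star1 O in let s2 := star2 O in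
  let p10 := p10 O in let p01 := p01 O in
  let p20 := p20 O in let p11 := p11 O in let p02 := p02 O in
   ((forall a, st (st a) = a) /\ (forall a b, st (a + b) = st a + st b) /\
    (forall a b, st (a * b) = st b * st a) /\
    (forall (k : C) a, st (k *: a) = Num.conj k *: st a)) /\
   (* A-bimodules (C acting centrally) *)
   (is_bimod ra1 /\ is_bimod ra2 /\
    (forall (k : C) x, ra1 x (k%:A) = k%:A *: x) /\
    (forall (k : C) x, ra2 x (k%:A) = k%:A *: x)) /\
   (is_add d0 /\ (forall a b, d0 (a * b) = a *: d0 b + ra1 (d0 a) b) /\
    (forall (k : C) a, d0 (k *: a) = k%:A *: d0 a) /\
    is_add d1 /\
    (forall a x, d1 (a *: x) = w (d0 a) x + a *: d1 x) /\
    (forall x a, d1 (ra1 x a) = ra2 (d1 x) a - w x (d0 a)) /\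
    (forall a, d1 (d0 a) = 0)) /\
   ((forall x x' y, w (x + x') y = w x y + w x' y) /\
    (forall x y y', w x (y + y') = w x y + w x y') /\
    (forall a x y, w (a *: x) y = a *: w x y) /\
    (forall x a y, w (ra1 x a) y = w x (a *: y)) /\
    (forall x y a, w x (ra1 y a) = ra2 (w x y) a)) /\
   ((forall x : Om1 O, exists s : seq (A * A),
         x = \sum_(q <- s) q.1 *: d0 q.2) /\
    (forall z : Om2 O, exists s : seq (A * A * A),
         z = \sum_(q <- s) q.1.1 *: w (d0 q.1.2) (d0 q.2))) /\
   ((forall x, s1 (s1 x) = x) /\ is_add s1 /\
    (forall a x, s1 (a *: x) = ra1 (s1 x) (st a)) /\
    (forall x a, s1 (ra1 x a) = st a *: s1 x) /\
    (forall a, s1 (d0 a) = d0 (st a)) /\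
    (forall z, s2 (s2 z) = z) /\ is_add s2 /\
    (forall a z, s2 (a *: z) = ra2 (s2 z) (st a)) /\
    (forall z a, s2 (ra2 z a) = st a *: s2 z) /\
    (forall x y, s2 (w x y) = - w (s1 y) (s1 x)) /\
    (forall x, s2 (d1 x) = d1 (s1 x))) /\
   (* bidegree decomposition into sub-bimodules: complete families of
      orthogonal bimodule idempotents *)
   (bimod_map ra1 p10 /\ bimod_map ra1 p01 /\
    bimod_map ra2 p20 /\ bimod_map ra2 p11 /\ bimod_map ra2 p02 /\
    (forall x, p10 x + p01 x = x) /\
    (forall x, p10 (p10 x) = p10 x /\ p01 (p01 x) = p01 x /\
               p10 (p01 x) = 0 /\ p01 (p10 x) = 0) /\
    (forall z, p20 z + p11 z + p02 z = z) /\
    (forall z, p20 (p20 z) = p20 z /\ p11 (p11 z) = p11 z /\ p02 (p02 z) = p02 z /\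
               p20 (p11 z) = 0 /\ p20 (p02 z) = 0 /\ p11 (p20 z) = 0 /\
               p11 (p02 z) = 0 /\ p02 (p20 z) = 0 /\ p02 (p11 z) = 0)) /\
   ((forall x y, p20 (w (p10 x) (p10 y)) = w (p10 x) (p10 y)) /\
    (forall x y, p11 (w (p10 x) (p01 y)) = w (p10 x) (p01 y)) /\
    (forall x y, p11 (w (p01 x) (p10 y)) = w (p01 x) (p10 y)) /\
    (forall x y, p02 (w (p01 x) (p01 y)) = w (p01 x) (p01 y))) /\
   (* integrability: d = del + dbar, del^2 = dbar^2 = 0 *)
   ((forall x, p02 (d1 (p10 x)) = 0) /\ (forall x, p20 (d1 (p01 x)) = 0) /\
    (forall a, p20 (d1 (p10 (d0 a))) = 0) /\
    (forall a, p02 (d1 (p01 (d0 a))) = 0)) /\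
   ((forall x, s1 (p10 x) = p01 (s1 x)) /\ (forall x, s1 (p01 x) = p10 (s1 x))).

(* non-degenerate hermitian inner product: inner e f stands for <e, bar f>;
   it is a bimodule map E (x)_A bar E -> A, i.e. biadditive with
   <a e, bar f> = a <e, bar f> and <e, bar (a f)> = <e, bar f> a^*,
   hermitian, and bar f |-> <-, bar f> is a bijection onto Hom_A(E, A). *)
Definition hermitian_nondeg (A : pzRingType) (st : A -> A) (E : lmodType A)
  (inner : E -> E -> A) : Prop :=
  (forall e e' f, inner (e + e') f = inner e f + inner e' f) /\
  (forall e f f', inner e (f + f') = inner e f + inner e f') /\
  (forall a e f, inner (a *: e) f = a * inner e f) /\
  (forall e a f, inner e (a *: f) = inner e f * st a) /\
  (forall e f, st (inner e f) = inner f e) /\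
  (forall f, (forall e, inner e f = 0) -> f = 0) /\
  (forall phi : E -> A, @llinear A E A^o phi -> exists f, forall e, phi e = inner e f).

From HB Require Import structures.
From mathcomp Require Import all_boot all_order all_algebra.
From Stdlib Require Import IndefiniteDescription.
Import Order.TTheory GRing.Theory Num.Theory.
Local Open Scope ring_scope.
Set Implicit Arguments. Unset Strict Implicit.

(* The (0,2)-part of R_E = (d ⊗ id − id ∧ ∇_E)∇_E only sees the (0,1)-part of
   ∇_E, which is ∂̄_E; it is therefore the curvature of the holomorphic
   structure, which vanishes.  For the (2,0)-part, apply d to the metric
   compatibility d⟨e, f̄⟩ = ⟨∇e, f̄⟩ + ⟨e, ∇̃f̄⟩: since d² = 0, the Leibniz rule
   gives ⟨R_E e, f̄⟩ = −⟨e, R̃_E f̄⟩.  As * exchanges Ω^{2,0} and Ω^{0,2}, the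
   (2,0)-part of the left side is ⟨R_E^{2,0} e, f̄⟩ while that of the right
   side only involves R_E^{0,2} f = 0.  A non-degenerate metric on a finitely
   generated projective module separates Ω² ⊗_A E through these pairings, so
   R_E^{2,0} e = 0. *)

Section AdditiveMaps.
Variables U V : zmodType.
Implicit Types f g : U -> V.

Lemma add_map0 f : is_add f -> f 0 = 0.
Proof. by move=> fD; apply: (addrI (f 0)); rewrite -fD !addr0. Qed.

Lemma add_mapN f : is_add f -> forall x, f (- x) = - f x.
Proof. by move=> fD x; apply/eqP; rewrite -addr_eq0 -fD addNr add_map0. Qed.

Lemma add_mapB f : is_add f -> forall x y, f (x - y) = f x - f y.
Proof. by move=> fD x y; rewrite fD add_mapN. Qed.

Lemma add_map_sum f : is_add f ->
  forall (I : Type) (r : seq I) (P : pred I) (F : I -> U),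
  f (\sum_(i <- r | P i) F i) = \sum_(i <- r | P i) f (F i).
Proof. by move=> fD I r P F; rewrite (big_morph f fD (add_map0 fD)). Qed.

Lemma is_add_add f g : is_add f -> is_add g -> is_add (fun x => f x + g x).
Proof. by move=> fD gD x y; rewrite fD gD addrACA. Qed.

Lemma is_add_sub f g : is_add f -> is_add g -> is_add (fun x => f x - g x).
Proof. by move=> fD gD x y; rewrite fD gD opprD addrACA. Qed.

Lemma is_add_opp f : is_add f -> is_add (fun x => - f x).
Proof. by move=> fD x y; rewrite fD opprD. Qed.

End AdditiveMaps.

Lemma is_add_comp (U V W : zmodType) (f : U -> V) (g : V -> W) :
  is_add f -> is_add g -> is_add (fun x => g (f x)).
Proof. by move=> fD gD x y; rewrite fD gD. Qed.

Section TensorProduct.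
Variables (A : pzRingType) (M N : lmodType A) (ra : M -> A -> M).
Variables (T : zmodType) (t : M -> N -> T).
Hypothesis tensorT : is_tensor ra t.

Lemma tensor_addl n : is_add (t ^~ n).
Proof. by case: tensorT => -[tDl _ _] _ x y; rewrite tDl. Qed.

Lemma tensor_addr m : is_add (t m).
Proof. by case: tensorT => -[_ tDr _] _ x y; rewrite tDr. Qed.

Lemma tensor_balanced m a n : t (ra m a) n = t m (a *: n).
Proof. by case: tensorT => -[_ _ ->]. Qed.

Lemma tensor_ext (Z : zmodType) (g1 g2 : T -> Z) :
  is_add g1 -> is_add g2 -> (forall m n, g1 (t m n) = g2 (t m n)) ->
  forall X, g1 X = g2 X.
Proof.
move=> g1D g2D g12 X; case: tensorT => -[tDl tDr tbal] univ.
have gbal : biadd_bal ra (fun m n => g1 (t m n)).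
  by split=> *; rewrite ?tDl ?tDr ?tbal ?g1D.
have [g [_ _ g_uniq]] := univ Z _ gbal.
by rewrite (g_uniq g1) // (g_uniq g2).
Qed.

Lemma tensor_lift_family (I : Type) (Z : zmodType) (f : I -> M -> N -> Z) :
  (forall i, biadd_bal ra (f i)) ->
  exists g : I -> T -> Z,
    (forall i, is_add (g i)) /\ forall i m n, g i (t m n) = f i m n.
Proof.
move=> fbal; case: tensorT => _ univ.
have /functional_choice[g gP] : forall i, exists g : T -> Z,
    is_add g /\ forall m n, g (t m n) = f i m n.
  by move=> i; have [g [? ? _]] := univ Z _ (fbal i); exists g.
by exists g; split=> i; case: (gP i).
Qed.

End TensorProduct.

Section HermitianMetric.
Variables (A : pzRingType) (st : A -> A) (E : lmodType A) (inner : E -> E -> A).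
Hypothesis herm : hermitian_nondeg st inner.

Lemma innerDl e e' f : inner (e + e') f = inner e f + inner e' f.
Proof. by case: herm. Qed.
Lemma innerDr e f f' : inner e (f + f') = inner e f + inner e f'.
Proof. by case: herm => _ []. Qed.
Lemma innerZl a e f : inner (a *: e) f = a * inner e f.
Proof. by case: herm => _ [_ []]. Qed.
Lemma innerZr e a f : inner e (a *: f) = inner e f * st a.
Proof. by case: herm => _ [_ [_ []]]. Qed.

Lemma right_pairing_bal (M : lmodType A) (ra : M -> A -> M) :
  is_bimod ra -> forall f, biadd_bal ra (fun z g => ra z (inner g f)).
Proof.
case=> raDl raDr raM _ _ f.
by split=> *; rewrite ?raDl ?innerDl ?raDr ?innerZl ?raM.
Qed.

Lemma conj_pairing_bal (M : lmodType A) (ra : M -> A -> M) (s : M -> M) :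
  is_add s -> (forall z a, s (ra z a) = st a *: s z) ->
  forall e, biadd_bal ra (fun z g => inner e g *: s z).
Proof.
move=> sD s_ra e.
by split=> *; rewrite ?sD ?scalerDr ?innerDr ?scalerDl ?s_ra ?innerZr ?scalerA.
Qed.

Lemma hermitian_dual_basis : fg_projective E ->
  exists n (F G : 'I_n -> E), forall e, e = \sum_(i < n) inner e (F i) *: G i.
Proof.
case: herm => _ [_ [_ [_ [_ [_ represent]]]]] [n [s [p [[sD sZ] [pD pZ] ps]]]].
have /fin_all_exists[F sF] : forall i : 'I_n, exists f, forall e, s e 0 i = inner e f.
  by move=> i; apply: represent; split=> [x y | a x]; rewrite ?sD ?sZ mxE.
exists n, F, (fun i => p 'e_i) => e.
rewrite -{1}(ps e) (row_sum_delta (s e)) (add_map_sum pD).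
by apply: eq_bigr => i _; rewrite pZ sF.
Qed.

Lemma metric_pairing_eq0 (M : lmodType A) (ra : M -> A -> M)
    (T : zmodType) (t : M -> E -> T) (P : E -> T -> M) :
  fg_projective E -> is_tensor ra t ->
  (forall f, is_add (P f)) -> (forall f z g, P f (t z g) = ra z (inner g f)) ->
  forall X, (forall f, P f X = 0) -> X = 0.
Proof.
move=> projE tensorT PD Pt X PX0.
have [n [F [G dual]]] := hermitian_dual_basis projE.
have expand Y : Y = \sum_(i < n) t (P (F i) Y) (G i).
  move: Y; apply: (tensor_ext tensorT (g1 := id)) => //.
    move=> x y; rewrite -big_split; apply: eq_bigr => i _ /=.
    by rewrite PD (tensor_addl tensorT).
  move=> z g; rewrite {1}(dual g) (add_map_sum (tensor_addr tensorT z)).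
  by apply: eq_bigr => i _; rewrite Pt (tensor_balanced tensorT).
rewrite (expand X) big1 // => i _.
by rewrite PX0 (add_map0 (tensor_addl tensorT _)).
Qed.

End HermitianMetric.

Section CalculusAxioms.
Variables (C : numClosedFieldType) (A : algType C) (O : calc A).
Hypothesis HO : int_star_calc O.

Local Ltac calc_axiom :=
  let H := fresh in pose proof HO as H; hnf in H; decompose [and and3 and5] H;
  by [] || firstorder.

Lemma calc_bimod1 : is_bimod (ra1 O). Proof. calc_axiom. Qed.
Lemma calc_bimod2 : is_bimod (ra2 O). Proof. calc_axiom. Qed.

Lemma d1D : is_add (d1 O). Proof. calc_axiom. Qed.
Lemma d1_leibnizl a x : d1 O (a *: x) = wedge O (d0 O a) x + a *: d1 O x.
Proof. calc_axiom. Qed.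
Lemma d1_leibnizr x a : d1 O (ra1 O x a) = ra2 O (d1 O x) a - wedge O x (d0 O a).
Proof. calc_axiom. Qed.
Lemma d1_d0 a : d1 O (d0 O a) = 0. Proof. calc_axiom. Qed.

Lemma wedgeDl x x' y : wedge O (x + x') y = wedge O x y + wedge O x' y.
Proof. calc_axiom. Qed.
Lemma wedgeDr x y y' : wedge O x (y + y') = wedge O x y + wedge O x y'.
Proof. calc_axiom. Qed.
Lemma wedgeZl a x y : wedge O (a *: x) y = a *: wedge O x y.
Proof. calc_axiom. Qed.
Lemma wedge_balanced x a y : wedge O (ra1 O x a) y = wedge O x (a *: y).
Proof. calc_axiom. Qed.
Lemma wedge_ra1r x y a : wedge O x (ra1 O y a) = ra2 O (wedge O x y) a.
Proof. calc_axiom. Qed.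

Lemma Om2_generated z : exists s : seq (A * A * A),
  z = \sum_(q <- s) q.1.1 *: wedge O (d0 O q.1.2) (d0 O q.2).
Proof. calc_axiom. Qed.

Lemma star1D : is_add (star1 O). Proof. calc_axiom. Qed.
Lemma star1_ra1 x a : star1 O (ra1 O x a) = star O a *: star1 O x.
Proof. calc_axiom. Qed.
Lemma star1_p01 x : star1 O (p01 O x) = p10 O (star1 O x).
Proof. calc_axiom. Qed.
Lemma star2D : is_add (star2 O). Proof. calc_axiom. Qed.
Lemma star2Zl a z : star2 O (a *: z) = ra2 O (star2 O z) (star O a).
Proof. calc_axiom. Qed.
Lemma star2_ra2 z a : star2 O (ra2 O z a) = star O a *: star2 O z.
Proof. calc_axiom. Qed.
Lemma star2_wedge x y : star2 O (wedge O x y) = - wedge O (star1 O y) (star1 O x).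
Proof. calc_axiom. Qed.
Lemma star2_d1 x : star2 O (d1 O x) = d1 O (star1 O x).
Proof. calc_axiom. Qed.

Lemma p10_add_p01 x : p10 O x + p01 O x = x. Proof. calc_axiom. Qed.
Lemma p01_p01 x : p01 O (p01 O x) = p01 O x. Proof. calc_axiom. Qed.
Lemma p10_p01 x : p10 O (p01 O x) = 0. Proof. calc_axiom. Qed.

Lemma p20D : is_add (p20 O). Proof. calc_axiom. Qed.
Lemma p20Z a z : p20 O (a *: z) = a *: p20 O z. Proof. calc_axiom. Qed.
Lemma p20_ra2 z a : p20 O (ra2 O z a) = ra2 O (p20 O z) a.
Proof. calc_axiom. Qed.
Lemma p11D : is_add (p11 O). Proof. calc_axiom. Qed.
Lemma p02D : is_add (p02 O). Proof. calc_axiom. Qed.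
Lemma p02Z a z : p02 O (a *: z) = a *: p02 O z. Proof. calc_axiom. Qed.

Lemma p20_p20 z : p20 O (p20 O z) = p20 O z. Proof. calc_axiom. Qed.
Lemma p20_p11 z : p20 O (p11 O z) = 0. Proof. calc_axiom. Qed.
Lemma p20_p02 z : p20 O (p02 O z) = 0. Proof. calc_axiom. Qed.
Lemma p02_p20 z : p02 O (p20 O z) = 0. Proof. calc_axiom. Qed.
Lemma p02_p11 z : p02 O (p11 O z) = 0. Proof. calc_axiom. Qed.
Lemma p02_p02 z : p02 O (p02 O z) = p02 O z. Proof. calc_axiom. Qed.

Lemma wedge_bideg20 x y : p20 O (wedge O (p10 O x) (p10 O y)) = wedge O (p10 O x) (p10 O y).
Proof. calc_axiom. Qed.
Lemma wedge_bideg11l x y : p11 O (wedge O (p10 O x) (p01 O y)) = wedge O (p10 O x) (p01 O y).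
Proof. calc_axiom. Qed.
Lemma wedge_bideg11r x y : p11 O (wedge O (p01 O x) (p10 O y)) = wedge O (p01 O x) (p10 O y).
Proof. calc_axiom. Qed.
Lemma wedge_bideg02 x y : p02 O (wedge O (p01 O x) (p01 O y)) = wedge O (p01 O x) (p01 O y).
Proof. calc_axiom. Qed.

Lemma p02_d1_p10 x : p02 O (d1 O (p10 O x)) = 0. Proof. calc_axiom. Qed.

End CalculusAxioms.

Section Bidegree.
Variables (C : numClosedFieldType) (A : algType C) (O : calc A).
Hypothesis HO : int_star_calc O.

Lemma p02_wedge x y : p02 O (wedge O x y) = wedge O (p01 O x) (p01 O y).
Proof.
rewrite -{1}(p10_add_p01 HO x) -{1}(p10_add_p01 HO y).
rewrite !(wedgeDl HO, wedgeDr HO) !(p02D HO).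
rewrite -[wedge O (p10 O x) (p10 O y)](wedge_bideg20 HO).
rewrite -[wedge O (p10 O x) (p01 O y)](wedge_bideg11l HO).
rewrite -[wedge O (p01 O x) (p10 O y)](wedge_bideg11r HO).
rewrite -[wedge O (p01 O x) (p01 O y)](wedge_bideg02 HO).
by rewrite (p02_p20 HO) !(p02_p11 HO) (p02_p02 HO) !add0r.
Qed.

Lemma p20_wedge x y : p20 O (wedge O x y) = wedge O (p10 O x) (p10 O y).
Proof.
rewrite -{1}(p10_add_p01 HO x) -{1}(p10_add_p01 HO y).
rewrite !(wedgeDl HO, wedgeDr HO) !(p20D HO).
rewrite -[wedge O (p10 O x) (p10 O y)](wedge_bideg20 HO).
rewrite -[wedge O (p10 O x) (p01 O y)](wedge_bideg11l HO).
rewrite -[wedge O (p01 O x) (p10 O y)](wedge_bideg11r HO).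
rewrite -[wedge O (p01 O x) (p01 O y)](wedge_bideg02 HO).
by rewrite (p20_p20 HO) !(p20_p11 HO) (p20_p02 HO) !addr0.
Qed.

Lemma p02_d1 x : p02 O (d1 O x) = p02 O (d1 O (p01 O x)).
Proof. by rewrite -{1}(p10_add_p01 HO x) (d1D HO) (p02D HO) (p02_d1_p10 HO) add0r. Qed.

Lemma dbar1_p01 x : dbar1 O (p01 O x) = p02 O (d1 O (p01 O x)).
Proof.
by rewrite /dbar1 (p10_p01 HO) (p01_p01 HO) (add_map0 (d1D HO)) (add_map0 (p11D HO)) add0r.
Qed.

Lemma p20_star2 z : p20 O (star2 O z) = star2 O (p02 O z).
Proof.
have [s ->] := Om2_generated HO z.
rewrite (add_map_sum (p02D HO)) !(add_map_sum (star2D HO)) (add_map_sum (p20D HO)).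
apply: eq_bigr => -[[a x] y] _ /=.
rewrite (p02Z HO) p02_wedge !(star2Zl HO) (p20_ra2 HO) !(star2_wedge HO).
by rewrite (add_mapN (p20D HO)) p20_wedge !(star1_p01 HO).
Qed.

End Bidegree.

Section Curvature.
Variables (C : numClosedFieldType) (A : algType C) (O : calc A).
Hypothesis HO : int_star_calc O.
Variables (E T1 T2 : lmodType A) (t1 : Om1 O -> E -> T1) (t2 : Om2 O -> E -> T2).
Hypotheses (Ht1 : is_tensor (ra1 O) t1) (Ht2 : is_tensor (ra2 O) t2).
Variable W : Om1 O -> T1 -> T2.
Hypotheses (HW : forall x, is_add (W x))
  (HWt : forall x y e, W x (t1 y e) = t2 (wedge O x y) e).
Variables (nabla : E -> T1) (Rc : T1 -> T2).
Hypotheses (HRc : is_add Rc)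
  (HRct : forall x f, Rc (t1 x f) = t2 (d1 O x) f - W x (nabla f)).
Variable P02 : T2 -> T2.
Hypotheses (HP02 : is_add P02) (HP02t : forall z e, P02 (t2 z e) = t2 (p02 O z) e).

Section ZeroTwoPart.
Variables (P01 : T1 -> T1) (dbarE : E -> T1) (Hol : T1 -> T2).
Hypotheses (HP01 : is_add P01) (HP01t : forall x e, P01 (t1 x e) = t1 (p01 O x) e).
Hypotheses (HHol : is_add Hol)
  (HHolt : forall x e, Hol (t1 x e) = t2 (dbar1 O x) e - W x (dbarE e)).
Hypothesis Hnabla01 : forall e, P01 (nabla e) = dbarE e.

Lemma P02_W x Y : P02 (W x Y) = W (p01 O x) (P01 Y).
Proof.
move: Y; apply: (tensor_ext Ht1 (is_add_comp (HW x) HP02) (is_add_comp HP01 (HW _))).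
by move=> y e; rewrite HWt HP02t HP01t HWt (p02_wedge HO).
Qed.

Lemma P02_curvature Y : P02 (Rc Y) = Hol (P01 Y).
Proof.
move: Y; apply: (tensor_ext Ht1 (is_add_comp HRc HP02) (is_add_comp HP01 HHol)).
move=> x f; rewrite HRct (add_mapB HP02) HP02t P02_W HP01t HHolt Hnabla01.
by rewrite (dbar1_p01 HO) (p02_d1 HO).
Qed.

End ZeroTwoPart.

Section MetricCompatibility.
Variable inner : E -> E -> A.
Hypothesis Hinner : hermitian_nondeg (star O) inner.
Variables (M1 : T1 -> E -> Om1 O) (M2 : E -> T1 -> Om1 O).
Hypotheses (HM1 : forall f, is_add (M1 ^~ f))
  (HM1t : forall x g f, M1 (t1 x g) f = ra1 O x (inner g f)).
Hypotheses (HM2 : forall e, is_add (M2 e))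
  (HM2t : forall e k g, M2 e (t1 k g) = inner e g *: star1 O k).
Hypothesis Hmetric : forall e f, d0 O (inner e f) = M1 (nabla e) f + M2 e (nabla f).
(* N1 f X = (id ⊗ ⟨-, f̄⟩) X and N2 e X = (⟨e, -⟩ ⊗ id) X̃: the degree-2
   analogues of M1 and M2. *)
Variables (N1 N2 : E -> T2 -> Om2 O).
Hypotheses (HN1 : forall f, is_add (N1 f))
  (HN1t : forall f z g, N1 f (t2 z g) = ra2 O z (inner g f)).
Hypotheses (HN2 : forall e, is_add (N2 e))
  (HN2t : forall e z g, N2 e (t2 z g) = inner e g *: star2 O z).

Lemma M1Dr Y g g' : M1 Y (g + g') = M1 Y g + M1 Y g'.
Proof.
case: (calc_bimod1 HO) => _ raDr _ _ _.
move: Y; apply: (tensor_ext Ht1 (HM1 _) (is_add_add (HM1 g) (HM1 g'))) => x h.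
by rewrite !HM1t (innerDr Hinner) raDr.
Qed.

Lemma M1Zr Y a g : M1 Y (a *: g) = ra1 O (M1 Y g) (star O a).
Proof.
case: (calc_bimod1 HO) => raDl _ raM _ _.
move: Y; apply: (tensor_ext Ht1 (HM1 _)) => [Y Y' | x h]; first by rewrite HM1 raDl.
by rewrite !HM1t (innerZr Hinner) raM.
Qed.

Lemma N1_W x f Y : N1 f (W x Y) = wedge O x (M1 Y f).
Proof.
move: Y; apply: (tensor_ext Ht1 (is_add_comp (HW x) (HN1 f))).
  exact: is_add_comp (HM1 f) (wedgeDr HO x).
by move=> y h; rewrite HWt HN1t HM1t (wedge_ra1r HO).
Qed.

Lemma N2_W e k Y : N2 e (W k Y) = - wedge O (M2 e Y) (star1 O k).
Proof.
move: Y; apply: (tensor_ext Ht1 (is_add_comp (HW k) (HN2 e))).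
  exact: is_add_opp (is_add_comp (HM2 e) (fun u v => wedgeDl HO u v _)).
by move=> y h; rewrite HWt HN2t (star2_wedge HO) HM2t (wedgeZl HO) scalerN.
Qed.

Section WedgePairing.
Variable B : T1 -> T1 -> Om2 O.
Hypotheses (HB : forall Y, is_add (B Y))
  (HBt : forall Y k g, B Y (t1 k g) = wedge O (M1 Y g) (star1 O k)).

Lemma B_t1l x h Z : B (t1 x h) Z = wedge O x (M2 h Z).
Proof.
move: Z; apply: (tensor_ext Ht1 (HB _) (is_add_comp (HM2 h) (wedgeDr HO x))) => k g.
by rewrite HBt HM1t HM2t (wedge_balanced HO).
Qed.

Lemma B_Dl Y Y' Z : B (Y + Y') Z = B Y Z + B Y' Z.
Proof.
move: Z; apply: (tensor_ext Ht1 (HB _) (is_add_add (HB Y) (HB Y'))) => k g.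
by rewrite !HBt HM1 (wedgeDl HO).
Qed.

Lemma d1_M1 f Y : d1 O (M1 Y f) = N1 f (Rc Y) - B Y (nabla f).
Proof.
move: Y; apply: (tensor_ext Ht1).
- exact: is_add_comp (HM1 f) (d1D HO).
- by apply: is_add_sub (is_add_comp HRc (HN1 f)) _ => Y Y'; apply: B_Dl.
move=> x h; rewrite HM1t (d1_leibnizr HO) B_t1l HRct (add_mapB (HN1 f)) HN1t N1_W.
by rewrite Hmetric (wedgeDr HO) opprD addrA.
Qed.

Lemma d1_M2 e Z : d1 O (M2 e Z) = N2 e (Rc Z) + B (nabla e) Z.
Proof.
move: Z; apply: (tensor_ext Ht1).
- exact: is_add_comp (HM2 e) (d1D HO).
- exact: is_add_add (is_add_comp HRc (HN2 e)) (HB _).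
move=> k g; rewrite HM2t (d1_leibnizl HO) Hmetric (wedgeDl HO) HRct (add_mapB (HN2 e)).
by rewrite HN2t N2_W HBt (star2_d1 HO) opprK addrC addrA addrAC.
Qed.

End WedgePairing.

Lemma wedge_pairing_exists : exists B : T1 -> T1 -> Om2 O,
  (forall Y, is_add (B Y)) /\ forall Y k g, B Y (t1 k g) = wedge O (M1 Y g) (star1 O k).
Proof.
apply: (tensor_lift_family Ht1) => Y.
by split=> *; rewrite ?(star1D HO) ?(wedgeDr HO) ?M1Dr ?(wedgeDl HO)
  ?(star1_ra1 HO) ?M1Zr ?(wedge_balanced HO).
Qed.

Lemma curvature_skew e f : N1 f (Rc (nabla e)) = - N2 e (Rc (nabla f)).
Proof.
have [B [HB HBt]] := wedge_pairing_exists.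
apply/eqP; rewrite -addr_eq0.
have := d1_d0 HO (inner e f).
rewrite Hmetric (d1D HO) (d1_M1 HB HBt) (d1_M2 HB HBt).
by rewrite addrACA addNr addr0 => ->.
Qed.

Variable P20 : T2 -> T2.
Hypotheses (HP20 : is_add P20) (HP20t : forall z e, P20 (t2 z e) = t2 (p20 O z) e).

Lemma p20_N1 f X : p20 O (N1 f X) = N1 f (P20 X).
Proof.
move: X; apply: (tensor_ext Ht2 (is_add_comp (HN1 f) (p20D HO)) (is_add_comp HP20 (HN1 f))).
by move=> z g; rewrite HN1t HP20t HN1t (p20_ra2 HO).
Qed.

Lemma p20_N2 e X : p20 O (N2 e X) = N2 e (P02 X).
Proof.
move: X; apply: (tensor_ext Ht2 (is_add_comp (HN2 e) (p20D HO)) (is_add_comp HP02 (HN2 e))).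
by move=> z g; rewrite HN2t HP02t HN2t (p20Z HO) (p20_star2 HO).
Qed.

End MetricCompatibility.
End Curvature.

Theorem mainTheorem13
  (C : numClosedFieldType) (A : algType C) (O : calc A)
  (HO : int_star_calc O)
  (* E: f.g. projective left A-module with non-degenerate hermitian metric *)
  (E : lmodType A) (HE : fg_projective E)
  (inner : E -> E -> A) (Hinner : hermitian_nondeg (star O) inner)
  (* T1 = Omega^1 (x)_A E,  T2 = Omega^2 (x)_A E, with their left A-actions *)
  (T1 T2 : lmodType A) (t1 : Om1 O -> E -> T1) (t2 : Om2 O -> E -> T2)
  (Ht1 : is_tensor (ra1 O) t1) (Ht2 : is_tensor (ra2 O) t2)
  (Ht1l : forall a x e, a *: t1 x e = t1 (a *: x) e)
  (Ht2l : forall a z e, a *: t2 z e = t2 (a *: z) e)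
  (* the maps pi^{0,1} (x) id, pi^{2,0} (x) id, pi^{0,2} (x) id *)
  (P01 : T1 -> T1) (HP01 : is_add P01)
  (HP01t : forall x e, P01 (t1 x e) = t1 (p01 O x) e)
  (P20 P02 : T2 -> T2) (HP20 : is_add P20) (HP02 : is_add P02)
  (HP20t : forall z e, P20 (t2 z e) = t2 (p20 O z) e)
  (HP02t : forall z e, P02 (t2 z e) = t2 (p02 O z) e)
  (* W x = (x /\ -) : Omega^1 (x)_A E -> Omega^2 (x)_A E *)
  (W : Om1 O -> T1 -> T2) (HW : forall x, is_add (W x))
  (HWt : forall x y e, W x (t1 y e) = t2 (wedge O x y) e)
  (* holomorphic structure dbar_E : E -> Omega^{0,1} (x)_A E *)
  (dbarE : E -> T1) (HdbarE : is_add dbarE)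
  (HdbarEl : forall a e, dbarE (a *: e) = t1 (dbar0 O a) e + a *: dbarE e)
  (HdbarE01 : forall e, P01 (dbarE e) = dbarE e)
  (Hol : T1 -> T2) (HHol : is_add Hol)
  (HHolt : forall x e, Hol (t1 x e) = t2 (dbar1 O x) e - W x (dbarE e))
  (Hflat : forall e, Hol (dbarE e) = 0)
  (* the Chern connection *)
  (nabla : E -> T1) (Hnabla : is_add nabla)
  (Hnablal : forall a e, nabla (a *: e) = t1 (d0 O a) e + a *: nabla e)
  (Hnabla01 : forall e, P01 (nabla e) = dbarE e)
  (M1 : T1 -> E -> Om1 O) (HM1 : forall f, is_add (M1 ^~ f))
  (HM1t : forall x g f, M1 (t1 x g) f = ra1 O x (inner g f))
  (M2 : E -> T1 -> Om1 O) (HM2 : forall e, is_add (M2 e))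
  (HM2t : forall e k g, M2 e (t1 k g) = inner e g *: star1 O k)
  (Hmetric : forall e f, d0 O (inner e f) = M1 (nabla e) f + M2 e (nabla f))
  (* curvature R_E = (d (x) id - id /\ nabla) nabla *)
  (Rc : T1 -> T2) (HRc : is_add Rc)
  (HRct : forall x f, Rc (t1 x f) = t2 (d1 O x) f - W x (nabla f)) :
  forall e, P02 (Rc (nabla e)) = 0 /\ P20 (Rc (nabla e)) = 0.
Proof.
have R02 f : P02 (Rc (nabla f)) = 0.
  rewrite (P02_curvature HO Ht1 HW HWt HRc HRct HP02 HP02t HP01 HP01t HHol HHolt Hnabla01).
  by rewrite Hnabla01 Hflat.
move=> e; split=> //.
have [N1 [HN1 HN1t]] := tensor_lift_family Ht2 (right_pairing_bal Hinner (calc_bimod2 HO)).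
have [N2 [HN2 HN2t]] :=
  tensor_lift_family Ht2 (conj_pairing_bal Hinner (star2D HO) (star2_ra2 HO)).
have skew f : N1 f (Rc (nabla e)) = - N2 e (Rc (nabla f)).
  exact: (curvature_skew HO Ht1 HW HWt HRc HRct Hinner HM1 HM1t HM2 HM2t Hmetric
            HN1 HN1t HN2 HN2t).
apply: (metric_pairing_eq0 Hinner HE Ht2 HN1 HN1t) => f.
rewrite -(p20_N1 HO Ht2 HN1 HN1t HP20 HP20t) skew (add_mapN (p20D HO)).
by rewrite (p20_N2 HO Ht2 HP02 HP02t HN2 HN2t) R02 (add_map0 (HN2 e)) oppr0.
Qed.
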